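(* Let $f,g$ satisfy the standing assumptions below and let $\beta>0$. For any $(x,y)\in\mathcal{M}$, $(x,y)$ is a $\mathcal{D}_f$-stationary point of (BLO) if and only if $(x,y)$ is a $\mathcal{D}_h$-stationary point of (CDB), i.e. $0\in\mathcal{D}_h(x,y)$.
   Context: Standing assumptions. (A1) Constants $M_f,\mu,L_g,Q_g>0$ exist such that: $f:\mathbb{R}^n\times\mathbb{R}^p\to\mathbb{R}$ is $M_f$-Lipschitz; $g$ is twice differentiable with $\nabla^2_{yy}g\succeq\mu I_p$; $\nabla g$ is $L_g$-Lipschitz; $\nabla^2_{yy}g,\nabla^2_{xy}g$ are $Q_g$-Lipschitz; $\nabla^2_{yy}g$ is continuously differentiable ($\nabla^2_{xy}g\in\mathbb{R}^{n\times p}$ has entries $\partial^2g/\partial x_i\partial y_j$). (A2) $f$ is a potential function of a conservative field $\mathcal{D}_f$ with compact convex values of norm at most $M_f$. Notation: $\mathcal{M}:=\{(x,y):\nabla_yg(x,y)=0\}$; $H=\nabla^2_{yy}g(x,y)$; $\mathcal{A}(x,y):=y-H^{-1}\nabla_yg(x,y)$; $\nabla^3_{xyy}g(x,y)[d]:=\lim_{t\to0}\frac1t(\nabla^2_{xy}g(x,y+td)-\nabla^2_{xy}g(x,y))$, $\nabla^3_{yyy}g(x,y)[d]:=\lim_{t\to0}\frac1t(\nabla^2_{yy}g(x,y+td)-\nabla^2_{yy}g(x,y))$; $J_{A,x}:=-\nabla^2_{xy}gH^{-1}+\nabla^3_{xyy}g[H^{-1}\nabla_yg]H^{-1}$, $J_{A,y}:=\nabla^3_{yyy}g[H^{-1}\nabla_yg]H^{-1}$;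 $\mathcal{D}_h(x,y):=\{(d_x+J_{A,x}d_y+\beta\nabla^2_{xy}g\nabla_yg,\ J_{A,y}d_y+\beta H\nabla_yg):(d_x,d_y)\in\mathcal{D}_f(x,\mathcal{A}(x,y))\}$. $(x,y)$ is a $\mathcal{D}_f$-stationary point of (BLO) if there is $(d_x,d_y)\in\mathcal{D}_f(x,y)$ with $d_x-\nabla^2_{xy}g(x,y)H^{-1}d_y=0$ and $\nabla_yg(x,y)=0$. *)

From HB Require Import structures.
From mathcomp Require Import all_boot all_order all_algebra.
From mathcomp Require Import all_classical all_reals all_analysis.
Set Implicit Arguments. Unset Strict Implicit. Unset Printing Implicit Defensive.
Import Order.TTheory GRing.Theory Num.Theory.
Import numFieldNormedType.Exports.
Local Open Scope classical_set_scope.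
Local Open Scope ring_scope.

Section Defs.
Variable R : realType.

Definition dotv k (u v : 'cV[R]_k) : R := \sum_(i < k) u i 0 * v i 0.
Definition enormv k (u : 'cV[R]_k) : R := Num.sqrt (dotv u u).

Variables n p : nat.
Notation pt := ('cV[R]_n * 'cV[R]_p)%type.

Definition dotp (u v : pt) : R := dotv u.1 v.1 + dotv u.2 v.2.
Definition enorm (u : pt) : R := Num.sqrt (dotp u u).

Definition opnorm_le k l (A : 'M[R]_(k, l)) (c : R) : Prop :=
  forall u : 'cV[R]_l, enormv (A *m u) <= c * enormv u.

Definition uncurry (h : 'cV[R]_n -> 'cV[R]_p -> R) : pt -> R := fun z => h z.1 z.2.

Definition ebas k (i : 'I_k) : 'cV[R]_k := delta_mx i 0.

Definition gradx (g : 'cV[R]_n -> 'cV[R]_p -> R) x y : 'cV[R]_n :=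
  \col_i 'D_(ebas i) (fun x' => g x' y) x.
Definition grady (g : 'cV[R]_n -> 'cV[R]_p -> R) x y : 'cV[R]_p :=
  \col_j 'D_(ebas j) (fun y' => g x y') y.
Definition gradg (g : 'cV[R]_n -> 'cV[R]_p -> R) (z : pt) : pt :=
  (gradx g z.1 z.2, grady g z.1 z.2).

Definition Hyy (g : 'cV[R]_n -> 'cV[R]_p -> R) x y : 'M[R]_p :=
  \matrix_(i, j) 'D_(ebas j) (fun y' => grady g x y' i 0) y.
Definition Hxy (g : 'cV[R]_n -> 'cV[R]_p -> R) x y : 'M[R]_(n, p) :=
  \matrix_(i, j) 'D_(ebas i) (fun x' => grady g x' y j 0) x.

Definition D3xyy (g : 'cV[R]_n -> 'cV[R]_p -> R) x y (d : 'cV[R]_p) : 'M[R]_(n, p) :=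
  lim ((fun t : R => t^-1 *: (Hxy g x (y + t *: d) - Hxy g x y)) @ 0^').
Definition D3yyy (g : 'cV[R]_n -> 'cV[R]_p -> R) x y (d : 'cV[R]_p) : 'M[R]_p :=
  lim ((fun t : R => t^-1 *: (Hyy g x (y + t *: d) - Hyy g x y)) @ 0^').

Definition Amap g x y : 'cV[R]_p := y - invmx (Hyy g x y) *m grady g x y.

Definition JAx g x y : 'M[R]_(n, p) :=
  - (Hxy g x y *m invmx (Hyy g x y))
  + D3xyy g x y (invmx (Hyy g x y) *m grady g x y) *m invmx (Hyy g x y).
Definition JAy g x y : 'M[R]_p :=
  D3yyy g x y (invmx (Hyy g x y) *m grady g x y) *m invmx (Hyy g x y).

Definition Dh (Df : 'cV[R]_n -> 'cV[R]_p -> set pt) g (beta : R) x y : set pt :=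
  [set (d.1 + JAx g x y *m d.2 + beta *: (Hxy g x y *m grady g x y),
        JAy g x y *m d.2 + beta *: (Hyy g x y *m grady g x y)) | d in Df x (Amap g x y)].

Definition Df_stationary (Df : 'cV[R]_n -> 'cV[R]_p -> set pt) g x y : Prop :=
  (exists2 d, Df x y d & d.1 - Hxy g x y *m invmx (Hyy g x y) *m d.2 = 0)
  /\ grady g x y = 0.

Definition lipschitz_pt (h : pt -> R) (M : R) : Prop :=
  forall z z', `|h z - h z'| <= M * enorm (z - z').

Definition abs_cont01 (u : R -> R) : Prop :=
  forall eps : R, 0 < eps -> exists2 delta : R, 0 < delta &
    forall (k : nat) (a b : nat -> R),
      (forall i, (i < k)%N -> 0 <= a i /\ a i <= b i /\ b i <= 1) ->
      (forall i j, (i < k)%N -> (j < k)%N -> i <> j -> b i <= a j \/ b j <= a i) ->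
      \sum_(i < k) (b i - a i) < delta ->
      \sum_(i < k) `|u (b i) - u (a i)| < eps.

Definition ac_curve (gam : R -> pt) : Prop :=
  (forall i : 'I_n, abs_cont01 (fun t => (gam t).1 i 0)) /\
  (forall j : 'I_p, abs_cont01 (fun t => (gam t).2 j 0)).

(* t |-> max_{v in D(gam t)} <gam'(t), v>  (sup = max for compact nonempty values) *)
Definition field_integrand (D : pt -> set pt) (gam : R -> pt) (t : R) : R :=
  sup [set dotp (derive1 gam t) v | v in D (gam t)].

Definition conservative_field (D : pt -> set pt) : Prop :=
  closed [set zv : pt * pt | D zv.1 zv.2] /\
  (forall z, D z !=set0 /\ compact (D z)) /\
  (forall gam : R -> pt, ac_curve gam -> gam 0 = gam 1 ->
     (\int[lebesgue_measure]_(t in `[0%R, 1%R]%classic) (field_integrand D gam t)%:E = 0)%E).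

Definition potential_of (f : pt -> R) (D : pt -> set pt) : Prop :=
  forall gam : R -> pt, ac_curve gam ->
    (\int[lebesgue_measure]_(t in `[0%R, 1%R]%classic) (field_integrand D gam t)%:E
       = (f (gam 1) - f (gam 0))%:E)%E.

End Defs.

From HB Require Import structures.
From mathcomp Require Import all_boot all_order all_algebra.
From mathcomp Require Import all_classical all_reals all_analysis.
Import Order.TTheory GRing.Theory Num.Theory.
Import numFieldNormedType.Exports.
Local Open Scope classical_set_scope.
Local Open Scope ring_scope.

(* On M we have grad_y g = 0, so A(x,y) = y, the third-order terms of
   J_A are derivatives in the zero direction and vanish, J_A,x = -Hxy H^-1,
   J_A,y = 0 and both beta-terms vanish.  Hence D_h(x,y) is the image of D_f(x,y)
   under d |-> (d_x - Hxy H^-1 d_y, 0), and 0 lies in it exactly when (x,y) is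
   D_f-stationary. *)

Section CriticalManifold.
Variables (R : realType) (n p : nat) (g : 'cV[R]_n -> 'cV[R]_p -> R).
Variables (x : 'cV[R]_n) (y : 'cV[R]_p).

Lemma D3xyy_dir0 : D3xyy g x y 0 = 0.
Proof.
rewrite /D3xyy (_ : (fun t : R => _) = fun=> 0) ?lim_cst //.
by apply/funext => t; rewrite scaler0 addr0 subrr scaler0.
Qed.

Lemma D3yyy_dir0 : D3yyy g x y 0 = 0.
Proof.
rewrite /D3yyy (_ : (fun t : R => _) = fun=> 0) ?lim_cst //.
by apply/funext => t; rewrite scaler0 addr0 subrr scaler0.
Qed.

Hypothesis grady0 : grady g x y = 0.

Lemma Amap_crit : Amap g x y = y.
Proof. by rewrite /Amap grady0 mulmx0 subr0. Qed.

Lemma JAx_crit : JAx g x y = - (Hxy g x y *m invmx (Hyy g x y)).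
Proof. by rewrite /JAx grady0 mulmx0 D3xyy_dir0 mul0mx addr0. Qed.

Lemma JAy_crit : JAy g x y = 0.
Proof. by rewrite /JAy grady0 mulmx0 D3yyy_dir0 mul0mx. Qed.

Lemma Dh_crit (Df : 'cV[R]_n -> 'cV[R]_p -> set ('cV[R]_n * 'cV[R]_p)%type)
    (beta : R) :
  Dh Df g beta x y =
    [set (d.1 - Hxy g x y *m invmx (Hyy g x y) *m d.2, 0) | d in Df x y].
Proof.
rewrite /Dh Amap_crit JAx_crit JAy_crit grady0 !mulmx0 scaler0.
by under eq_imagel => d _ do rewrite addr0 mul0mx scaler0 addr0 mulNmx.
Qed.

End CriticalManifold.

Theorem proposition3p5 (R : realType) (n p : nat)
  (f g : 'cV[R]_n -> 'cV[R]_p -> R)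
  (Df : 'cV[R]_n -> 'cV[R]_p -> set ('cV[R]_n * 'cV[R]_p)%type)
  (Mf mu Lg Qg beta : R)
  (* (A1) *)
  (hMf : 0 < Mf) (hmu : 0 < mu) (hLg : 0 < Lg) (hQg : 0 < Qg)
  (f_lip : lipschitz_pt (uncurry f) Mf)
  (g_diff : forall z, differentiable (uncurry g) z)
  (g_diff2 : forall z, differentiable (gradg g) z)
  (g_strong : forall x y (d : 'cV[R]_p), mu * dotv d d <= dotv d (Hyy g x y *m d))
  (g_grad_lip : forall z z', enorm (gradg g z - gradg g z') <= Lg * enorm (z - z'))
  (Hyy_lip : forall z z' : ('cV[R]_n * 'cV[R]_p)%type,
      opnorm_le (Hyy g z.1 z.2 - Hyy g z'.1 z'.2) (Qg * enorm (z - z')))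
  (Hxy_lip : forall z z' : ('cV[R]_n * 'cV[R]_p)%type,
      opnorm_le (Hxy g z.1 z.2 - Hxy g z'.1 z'.2) (Qg * enorm (z - z')))
  (Hyy_C1 : (forall z : ('cV[R]_n * 'cV[R]_p)%type,
                differentiable (fun w : ('cV[R]_n * 'cV[R]_p)%type => Hyy g w.1 w.2) z) /\
            (forall v : ('cV[R]_n * 'cV[R]_p)%type,
                continuous (fun z : ('cV[R]_n * 'cV[R]_p)%type =>
                  'D_v (fun w : ('cV[R]_n * 'cV[R]_p)%type => Hyy g w.1 w.2) z)))
  (* (A2) *)
  (Df_cons : conservative_field (fun z : ('cV[R]_n * 'cV[R]_p)%type => Df z.1 z.2))
  (f_pot : potential_of (uncurry f) (fun z : ('cV[R]_n * 'cV[R]_p)%type => Df z.1 z.2))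
  (Df_convex : forall x y, convex_set (Df x y))
  (Df_bnd : forall x y v, Df x y v -> enorm v <= Mf)
  (hbeta : 0 < beta) :
  forall (x : 'cV[R]_n) (y : 'cV[R]_p), grady g x y = 0 ->
    (Df_stationary Df g x y <-> Dh Df g beta x y 0).
Proof.
move=> x y grady0; rewrite /Df_stationary Dh_crit //.
split=> [[[d Dd stat] _] | [d Dd /(congr1 fst) stat]].
- by exists d; rewrite ?stat.
- by split=> //; exists d.
Qed.
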